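(* Let $\mathbb E$ be a weakly congruence distributive category. Then (1) for every object $X$, every internal group in the fiber $Pt_X\mathbb E$ is trivial, i.e. its underlying split epimorphism $f:A\to X$ is an isomorphism; (2) every object of $\mathbb E$ carrying an internal associative Mal'tsev structure is a subobject of the terminal object (its map to $1$ is a monomorphism).
   Context: A finitely complete category $\mathbb E$ is weakly congruence distributive if for any equivalence relations $R,S,T$ on an object $X$ such that the supremum $R\vee S$ exists among equivalence relations on $X$, the conditions $T\wedge R=\Delta_X$ and $T\wedge S=\Delta_X$ imply $T\wedge(R\vee S)=\Delta_X$, where $\Delta_X$ is the discrete relation. $Pt_X\mathbb E$ is the category of triples $(A,f,s)$, $f:A\to X$, $s:X\to A$, $fs=1_X$, with morphisms commuting with $f$ and $s$; it is finitely complete (products are pullbacks over $X$), with terminal object $(X,1_X,1_X)$. An associative Mal'tsev structure on $X$ is $p:X^3\to X$ with $p(x,y,y)=x=p(y,y,x)$ and $p(x,y,p(z,u,v))=p(p(x,y,z),u,v)$. *)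

Set Implicit Arguments.
Unset Strict Implicit.

Record Category := {
  Ob :> Type;
  Hom : Ob -> Ob -> Type;
  idm : forall X, Hom X X;
  comp : forall X Y Z, Hom Y Z -> Hom X Y -> Hom X Z;
  comp_idl : forall X Y (f : Hom X Y), comp (idm Y) f = f;
  comp_idr : forall X Y (f : Hom X Y), comp f (idm X) = f;
  comp_assoc : forall X Y Z W (h : Hom Z W) (g : Hom Y Z) (f : Hom X Y),
      comp h (comp g f) = comp (comp h g) f
}.
Arguments Hom {c} X Y.
Arguments idm {c} X.
Arguments comp {c X Y Z} g f.

Record FinCompleteCategory := {
  fc_cat :> Category;
  term : fc_cat;
  to_term : forall X : fc_cat, Hom X term;
  to_term_uniq : forall X (u v : Hom X term), u = v;
  pb : forall X Y Z : fc_cat, Hom X Z -> Hom Y Z -> fc_cat;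
  pb1 : forall X Y Z (f : Hom X Z) (g : Hom Y Z), Hom (pb f g) X;
  pb2 : forall X Y Z (f : Hom X Z) (g : Hom Y Z), Hom (pb f g) Y;
  pb_comm : forall X Y Z (f : Hom X Z) (g : Hom Y Z),
      comp f (pb1 f g) = comp g (pb2 f g);
  pb_pair : forall X Y Z (f : Hom X Z) (g : Hom Y Z) W (a : Hom W X) (b : Hom W Y),
      comp f a = comp g b -> Hom W (pb f g);
  pb_pair1 : forall X Y Z (f : Hom X Z) (g : Hom Y Z) W (a : Hom W X) (b : Hom W Y)
      (H : comp f a = comp g b), comp (pb1 f g) (pb_pair H) = a;
  pb_pair2 : forall X Y Z (f : Hom X Z) (g : Hom Y Z) W (a : Hom W X) (b : Hom W Y)
      (H : comp f a = comp g b), comp (pb2 f g) (pb_pair H) = b;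
  pb_uniq : forall X Y Z (f : Hom X Z) (g : Hom Y Z) W (u v : Hom W (pb f g)),
      comp (pb1 f g) u = comp (pb1 f g) v -> comp (pb2 f g) u = comp (pb2 f g) v -> u = v
}.
Arguments term {_}.
Arguments to_term {_} X.
Arguments pb {_ _ _ _} _ _.
Arguments pb1 {_ _ _ _} _ _.
Arguments pb2 {_ _ _ _} _ _.
Arguments pb_pair {_ _ _ _ _ _ _ _ _} _.

Section Defs.
Variable C : FinCompleteCategory.

Definition is_mono (X Y : C) (m : Hom X Y) : Prop :=
  forall Z (a b : Hom Z X), comp m a = comp m b -> a = b.

Definition is_iso (X Y : C) (f : Hom X Y) : Prop :=
  exists g : Hom Y X, comp f g = idm Y /\ comp g f = idm X.

Definition prod (X Y : C) : C := pb (to_term X) (to_term Y).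
Definition prj1 (X Y : C) : Hom (prod X Y) X := pb1 _ _.
Definition prj2 (X Y : C) : Hom (prod X Y) Y := pb2 _ _.
Definition pair (X Y Z : C) (a : Hom Z X) (b : Hom Z Y) : Hom Z (prod X Y) :=
  pb_pair (to_term_uniq (comp (to_term X) a) (comp (to_term Y) b)).

(** * Internal relations on X: spans R -> X, X (jointly monic for relations) *)
Record span (X : C) := { sp_ob : C; sp1 : Hom sp_ob X; sp2 : Hom sp_ob X }.

Definition jointly_monic (X : C) (R : span X) : Prop :=
  forall Z (a b : Hom Z (sp_ob R)),
    comp (sp1 R) a = comp (sp1 R) b -> comp (sp2 R) a = comp (sp2 R) b -> a = b.

Definition in_rel (X : C) (R : span X) (Z : C) (x y : Hom Z X) : Prop :=
  exists d : Hom Z (sp_ob R), comp (sp1 R) d = x /\ comp (sp2 R) d = y.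

Definition is_equivalence_relation (X : C) (R : span X) : Prop :=
  jointly_monic R /\
  (forall Z (x : Hom Z X), in_rel R x x) /\
  (forall Z (x y : Hom Z X), in_rel R x y -> in_rel R y x) /\
  (forall Z (x y z : Hom Z X), in_rel R x y -> in_rel R y z -> in_rel R x z).

Definition rel_le (X : C) (R S : span X) : Prop :=
  exists m : Hom (sp_ob R) (sp_ob S),
    comp (sp1 S) m = sp1 R /\ comp (sp2 S) m = sp2 R.

Definition rel_eq (X : C) (R S : span X) : Prop := rel_le R S /\ rel_le S R.

Definition discrete_rel (X : C) : span X := {| sp_ob := X; sp1 := idm X; sp2 := idm X |}.

Definition rel_meet (X : C) (R S : span X) : span X :=
  let P := pb (pair (sp1 R) (sp2 R)) (pair (sp1 S) (sp2 S)) in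
  {| sp_ob := P;
     sp1 := comp (sp1 R) (pb1 _ _);
     sp2 := comp (sp2 R) (pb1 _ _) |}.

Definition is_equiv_sup (X : C) (R S J : span X) : Prop :=
  is_equivalence_relation J /\ rel_le R J /\ rel_le S J /\
  (forall K : span X, is_equivalence_relation K -> rel_le R K -> rel_le S K ->
     rel_le J K).

Definition weakly_congruence_distributive : Prop :=
  forall (X : C) (R S T J : span X),
    is_equivalence_relation R -> is_equivalence_relation S ->
    is_equivalence_relation T -> is_equiv_sup R S J ->
    rel_eq (rel_meet T R) (discrete_rel X) ->
    rel_eq (rel_meet T S) (discrete_rel X) ->
    rel_eq (rel_meet T J) (discrete_rel X).

(** An object of Pt_X E is (A, f, s) with f s = 1_X. Its square in Pt_X E is the
    pullback P of f along f (with section <s,s>); the terminal object is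
    (X,1,1), so the unit is necessarily s (the only Pt_X-map (X,1,1) -> (A,f,s)).
    The group axioms are stated for generalized elements (equivalent, by the
    universal property of the pullback, to the diagrammatic ones); a map
    u : Z -> P is identified with the pair (pb1 u, pb2 u). *)
Definition is_pt_square_pair (X A : C) (f : Hom A X) (Z : C)
    (u : Hom Z (pb f f)) (x y : Hom Z A) : Prop :=
  comp (pb1 f f) u = x /\ comp (pb2 f f) u = y.

Definition is_internal_group_in_Pt (X A : C) (f : Hom A X) (s : Hom X A)
    (m : Hom (pb f f) A) (i : Hom A A) : Prop :=
  comp f s = idm X /\
  (* m : (A,f,s) x (A,f,s) -> (A,f,s) is a morphism of Pt_X E *)
  comp f m = comp f (pb1 f f) /\
  comp m (@pb_pair C A A X f f X s s eq_refl) = s /\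
  (* i : (A,f,s) -> (A,f,s) is a morphism of Pt_X E *)
  comp f i = f /\ comp i s = s /\
  (forall Z (x y z : Hom Z A) (u v w t : Hom Z (pb f f)),
      is_pt_square_pair u x y -> is_pt_square_pair v (comp m u) z ->
      is_pt_square_pair w y z -> is_pt_square_pair t x (comp m w) ->
      comp m v = comp m t) /\
  (forall Z (x : Hom Z A) (u : Hom Z (pb f f)),
      is_pt_square_pair u x (comp s (comp f x)) -> comp m u = x) /\
  (forall Z (x : Hom Z A) (u : Hom Z (pb f f)),
      is_pt_square_pair u (comp s (comp f x)) x -> comp m u = x) /\
  (forall Z (x : Hom Z A) (u : Hom Z (pb f f)),
      is_pt_square_pair u x (comp i x) -> comp m u = comp s (comp f x)) /\
  (forall Z (x : Hom Z A) (u : Hom Z (pb f f)),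
      is_pt_square_pair u (comp i x) x -> comp m u = comp s (comp f x)).

Definition cube (Y : C) : C := prod (prod Y Y) Y.

Definition is_triple (Y Z : C) (u : Hom Z (cube Y)) (x y z : Hom Z Y) : Prop :=
  comp (prj1 Y Y) (comp (prj1 (prod Y Y) Y) u) = x /\
  comp (prj2 Y Y) (comp (prj1 (prod Y Y) Y) u) = y /\
  comp (prj2 (prod Y Y) Y) u = z.

Definition is_assoc_maltsev (Y : C) (p : Hom (cube Y) Y) : Prop :=
  (forall Z (x y : Hom Z Y) (u : Hom Z (cube Y)), is_triple u x y y -> comp p u = x) /\
  (forall Z (x y : Hom Z Y) (u : Hom Z (cube Y)), is_triple u y y x -> comp p u = x) /\
  (forall Z (x y z a b : Hom Z Y) (u v w t : Hom Z (cube Y)),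
      is_triple u z a b -> is_triple v x y (comp p u) ->
      is_triple w x y z -> is_triple t (comp p w) a b ->
      comp p v = comp p t).

End Defs.

(* Let g : A -> X and let P = A x_X A be its kernel pair. Among equivalence
   relations on P, the kernel pairs R and S of the two projections of P have
   as join the kernel pair J of the map P -> X. Suppose T is an equivalence
   relation on P meeting R and S discretely and relating any two diagonal
   points (a,a), (b,b) with g a = g b. Weak congruence distributivity makes
   T /\ J discrete; since those diagonal points are related by both T and J,
   they coincide, so g is a monomorphism.
   For an internal group in Pt_X the relation T is "a b^-1 = c d^-1", i.e.
   the kernel pair of the division map, and f is then a split epimorphism
   which is mono, hence an isomorphism. For an associative Mal'tsev operation
   p on Y, taking X = 1, T relates (a,b) to (c,d) when p(a,b,d) = c. *)

From Stdlib Require Import Setoid.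

Set Implicit Arguments.
Unset Strict Implicit.

Section Pullbacks.
Variable C : FinCompleteCategory.

Lemma pb_pair_comp (X Y Z : C) (f : Hom X Z) (g : Hom Y Z) W (a : Hom W X)
    (b : Hom W Y) (H : comp f a = comp g b) W' (h : Hom W' W)
    (H' : comp f (comp a h) = comp g (comp b h)) :
  comp (pb_pair H) h = pb_pair H'.
Proof.
  apply pb_uniq.
  - rewrite comp_assoc, !pb_pair1. reflexivity.
  - rewrite comp_assoc, !pb_pair2. reflexivity.
Qed.

Lemma pb_pair_ext (X Y Z : C) (f : Hom X Z) (g : Hom Y Z) W (a a' : Hom W X)
    (b b' : Hom W Y) (H : comp f a = comp g b) (H' : comp f a' = comp g b') :
  a = a' -> b = b' -> pb_pair H = pb_pair H'.
Proof.
  intros <- <-. apply pb_uniq; rewrite ?pb_pair1, ?pb_pair2; reflexivity.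
Qed.

Lemma pb_comm_comp (X Y Z : C) (f : Hom X Z) (g : Hom Y Z) W (u : Hom W (pb f g)) :
  comp f (comp (pb1 f g) u) = comp g (comp (pb2 f g) u).
Proof. rewrite !comp_assoc, pb_comm. reflexivity. Qed.

Definition pb_diag {A X : C} (g : Hom A X) {Z : C} (x : Hom Z A) : Hom Z (pb g g) :=
  pb_pair (eq_refl (comp g x)).

Lemma pb1_diag (A X : C) (g : Hom A X) Z (x : Hom Z A) : comp (pb1 g g) (pb_diag g x) = x.
Proof. apply pb_pair1. Qed.

Lemma pb2_diag (A X : C) (g : Hom A X) Z (x : Hom Z A) : comp (pb2 g g) (pb_diag g x) = x.
Proof. apply pb_pair2. Qed.

Lemma prj1_pair (X Y Z : C) (a : Hom Z X) (b : Hom Z Y) : comp (prj1 X Y) (pair a b) = a.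
Proof. apply pb_pair1. Qed.

Lemma prj2_pair (X Y Z : C) (a : Hom Z X) (b : Hom Z Y) : comp (prj2 X Y) (pair a b) = b.
Proof. apply pb_pair2. Qed.

Lemma pair_comp (X Y Z : C) (a : Hom Z X) (b : Hom Z Y) W (h : Hom W Z) :
  comp (pair a b) h = pair (comp a h) (comp b h).
Proof. apply pb_pair_comp. Qed.

Lemma pair_uniq (X Y Z : C) (w w' : Hom Z (prod X Y)) :
  comp (prj1 X Y) w = comp (prj1 X Y) w' -> comp (prj2 X Y) w = comp (prj2 X Y) w' ->
  w = w'.
Proof. apply pb_uniq. Qed.

Lemma pair_eta (X Y Z : C) (w : Hom Z (prod X Y)) :
  w = pair (comp (prj1 X Y) w) (comp (prj2 X Y) w).
Proof. apply pair_uniq; rewrite ?prj1_pair, ?prj2_pair; reflexivity. Qed.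

Lemma pair_inj (X Y Z : C) (a a' : Hom Z X) (b b' : Hom Z Y) :
  pair a b = pair a' b' -> a = a' /\ b = b'.
Proof.
  intros E. split.
  - rewrite <- (prj1_pair a b), E. apply prj1_pair.
  - rewrite <- (prj2_pair a b), E. apply prj2_pair.
Qed.

Lemma split_epi_mono_iso (X A : C) (f : Hom A X) (s : Hom X A) :
  comp f s = idm X -> is_mono f -> is_iso f.
Proof.
  intros fs Mf. exists s. split; [exact fs|].
  apply Mf. rewrite comp_assoc, fs, comp_idl, comp_idr. reflexivity.
Qed.

End Pullbacks.

Section Relations.
Variable C : FinCompleteCategory.

Definition kernel_pair (P W : C) (h : Hom P W) : span P :=
  {| sp_ob := pb h h; sp1 := pb1 h h; sp2 := pb2 h h |}.

Lemma in_kernel_pair (P W : C) (h : Hom P W) Z (u v : Hom Z P) :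
  in_rel (kernel_pair h) u v <-> comp h u = comp h v.
Proof.
  split.
  - intros [d [<- <-]]. apply pb_comm_comp.
  - intros E. exists (pb_pair E). split; [apply pb_pair1 | apply pb_pair2].
Qed.

Lemma kernel_pair_equiv (P W : C) (h : Hom P W) : is_equivalence_relation (kernel_pair h).
Proof.
  split; [|split; [|split]].
  - intros Z a b. apply pb_uniq.
  - intros Z x. apply in_kernel_pair. reflexivity.
  - intros Z x y. rewrite !in_kernel_pair. intros E. symmetry. exact E.
  - intros Z x y z. rewrite !in_kernel_pair. intros E1 E2. rewrite E1. exact E2.
Qed.

Lemma rel_leP (X : C) (R K : span X) :
  rel_le R K <-> (forall Z (u v : Hom Z X), in_rel R u v -> in_rel K u v).
Proof.
  split.
  - intros [m [E1 E2]] Z u v [d [<- <-]]. exists (comp m d).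
    rewrite !comp_assoc, E1, E2. split; reflexivity.
  - intros HRK. apply HRK. exists (idm _). rewrite !comp_idr. split; reflexivity.
Qed.

Lemma in_discrete_rel (X : C) Z (u v : Hom Z X) : in_rel (discrete_rel X) u v <-> u = v.
Proof.
  split.
  - intros [d [E1 E2]]. simpl in *. rewrite comp_idl in E1, E2. congruence.
  - intros <-. exists u. simpl. rewrite comp_idl. split; reflexivity.
Qed.

Lemma in_rel_meet (X : C) (T R : span X) Z (u v : Hom Z X) :
  in_rel (rel_meet T R) u v <-> in_rel T u v /\ in_rel R u v.
Proof.
  split.
  - intros [d [<- <-]]. simpl.
    pose proof (pb_comm (pair (sp1 T) (sp2 T)) (pair (sp1 R) (sp2 R))) as E.
    rewrite !pair_comp in E. apply pair_inj in E. destruct E as [E1 E2].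
    split.
    + exists (comp (pb1 _ _) d). rewrite !comp_assoc. split; reflexivity.
    + exists (comp (pb2 (pair (sp1 T) (sp2 T)) (pair (sp1 R) (sp2 R))) d).
      rewrite !comp_assoc, E1, E2. split; reflexivity.
  - intros [[t [<- <-]] [r [R1 R2]]].
    assert (H : comp (pair (sp1 T) (sp2 T)) t = comp (pair (sp1 R) (sp2 R)) r).
    { rewrite !pair_comp, R1, R2. reflexivity. }
    exists (pb_pair H). simpl. rewrite <- !comp_assoc, pb_pair1. split; reflexivity.
Qed.

Lemma rel_meet_discrete (X : C) (T R : span X) :
  is_equivalence_relation T -> is_equivalence_relation R ->
  (forall Z (u v : Hom Z X), in_rel T u v -> in_rel R u v -> u = v) ->
  rel_eq (rel_meet T R) (discrete_rel X).
Proof.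
  intros [_ [reflT _]] [_ [reflR _]] HTR. split; apply rel_leP; intros Z u v.
  - rewrite in_rel_meet, in_discrete_rel. intros [Tuv Ruv]. exact (HTR Z u v Tuv Ruv).
  - rewrite in_rel_meet, in_discrete_rel. intros <-. split; [apply reflT | apply reflR].
Qed.

Lemma discrete_rel_eq (X : C) (M : span X) Z (u v : Hom Z X) :
  rel_le M (discrete_rel X) -> in_rel M u v -> u = v.
Proof. intros LM Muv. apply in_discrete_rel. exact (proj1 (rel_leP _ _) LM Z u v Muv). Qed.

(* Two points of a pullback over the same point of Z are linked through the
   point made of the first coordinate of one and the second of the other. *)
Lemma kernel_pair_pb_sup (X Y Z : C) (f : Hom X Z) (g : Hom Y Z) :
  is_equiv_sup (kernel_pair (pb1 f g)) (kernel_pair (pb2 f g))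
               (kernel_pair (comp f (pb1 f g))).
Proof.
  split; [apply kernel_pair_equiv | split; [|split]].
  - apply rel_leP. intros W u v. rewrite !in_kernel_pair, <- !comp_assoc.
    intros E. rewrite E. reflexivity.
  - apply rel_leP. intros W u v. rewrite !in_kernel_pair, <- !comp_assoc, !pb_comm_comp.
    intros E. rewrite E. reflexivity.
  - intros K [_ [_ [_ transK]]] RK SK. apply rel_leP. intros W u v.
    rewrite in_kernel_pair, <- !comp_assoc. intros E.
    assert (Huv : comp f (comp (pb1 f g) u) = comp g (comp (pb2 f g) v)).
    { rewrite E. apply pb_comm_comp. }
    apply transK with (pb_pair Huv).
    + apply (proj1 (rel_leP _ _) RK). apply in_kernel_pair. rewrite pb_pair1. reflexivity.
    + apply (proj1 (rel_leP _ _) SK). apply in_kernel_pair. rewrite pb_pair2. reflexivity.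
Qed.

Lemma wcd_mono_criterion (wcd : weakly_congruence_distributive C)
    (A X : C) (g : Hom A X) (T : span (pb g g)) :
  is_equivalence_relation T ->
  (forall Z (u v : Hom Z (pb g g)), in_rel T u v ->
      comp (pb1 g g) u = comp (pb1 g g) v -> u = v) ->
  (forall Z (u v : Hom Z (pb g g)), in_rel T u v ->
      comp (pb2 g g) u = comp (pb2 g g) v -> u = v) ->
  (forall Z (x y : Hom Z A), comp g x = comp g y -> in_rel T (pb_diag g x) (pb_diag g y)) ->
  is_mono g.
Proof.
  intros eqT T_pb1 T_pb2 T_diag.
  assert (TR : rel_eq (rel_meet T (kernel_pair (pb1 g g))) (discrete_rel _)).
  { apply rel_meet_discrete; [exact eqT | apply kernel_pair_equiv |].
    intros Z u v Tuv. rewrite in_kernel_pair. apply T_pb1, Tuv. }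
  assert (TS : rel_eq (rel_meet T (kernel_pair (pb2 g g))) (discrete_rel _)).
  { apply rel_meet_discrete; [exact eqT | apply kernel_pair_equiv |].
    intros Z u v Tuv. rewrite in_kernel_pair. apply T_pb2, Tuv. }
  destruct (wcd _ _ _ _ _ (kernel_pair_equiv _) (kernel_pair_equiv _) eqT
              (kernel_pair_pb_sup g g) TR TS) as [TJ _].
  intros Z x y Exy.
  rewrite <- (pb1_diag g x), <- (pb1_diag g y). f_equal.
  apply (discrete_rel_eq TJ), in_rel_meet. split.
  - apply T_diag, Exy.
  - apply in_kernel_pair. rewrite <- !comp_assoc, !pb1_diag. exact Exy.
Qed.

End Relations.

Section InternalGroup.
Variable C : FinCompleteCategory.
Variables (X A : C) (f : Hom A X) (s : Hom X A) (m : Hom (pb f f) A) (i : Hom A A).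
Hypothesis G : is_internal_group_in_Pt s m i.

Definition gmul {Z : C} {x y : Hom Z A} (H : comp f x = comp f y) : Hom Z A :=
  comp m (pb_pair H).
Definition gunit Z (x : Hom Z A) : Hom Z A := comp s (comp f x).

Lemma gmul_ext Z (x x' y y' : Hom Z A) (H : comp f x = comp f y) (H' : comp f x' = comp f y') :
  x = x' -> y = y' -> gmul H = gmul H'.
Proof. intros Ex Ey. unfold gmul. f_equal. apply pb_pair_ext; assumption. Qed.

Lemma f_gmul Z (x y : Hom Z A) (H : comp f x = comp f y) : comp f (gmul H) = comp f x.
Proof.
  destruct G as (_ & Gm & _).
  unfold gmul. rewrite comp_assoc, Gm, <- comp_assoc, pb_pair1. reflexivity.
Qed.

Lemma f_inv Z (x : Hom Z A) : comp f (comp i x) = comp f x.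
Proof. destruct G as (_ & _ & _ & Gi & _). rewrite comp_assoc, Gi. reflexivity. Qed.

Lemma f_gunit Z (x : Hom Z A) : comp f (gunit x) = comp f x.
Proof. destruct G as (Gs & _). unfold gunit. rewrite comp_assoc, Gs, comp_idl. reflexivity. Qed.

Lemma gunit_eq Z (x y : Hom Z A) : comp f x = comp f y -> gunit x = gunit y.
Proof. unfold gunit. intros ->. reflexivity. Qed.

Lemma gmul_assoc Z (x y z : Hom Z A) (H1 : comp f x = comp f y)
    (H2 : comp f (gmul H1) = comp f z) (H3 : comp f y = comp f z)
    (H4 : comp f x = comp f (gmul H3)) :
  gmul H2 = gmul H4.
Proof.
  destruct G as (_ & _ & _ & _ & _ & Ga & _).
  apply (Ga Z x y z (pb_pair H1) (pb_pair H2) (pb_pair H3) (pb_pair H4));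
    split; rewrite ?pb_pair1, ?pb_pair2; reflexivity.
Qed.

Lemma gmul_unit_r Z (x : Hom Z A) (H : comp f x = comp f (gunit x)) : gmul H = x.
Proof.
  destruct G as (_ & _ & _ & _ & _ & _ & Gu & _).
  apply Gu. split; [apply pb_pair1 | apply pb_pair2].
Qed.

Lemma gmul_unit_l Z (x : Hom Z A) (H : comp f (gunit x) = comp f x) : gmul H = x.
Proof.
  destruct G as (_ & _ & _ & _ & _ & _ & _ & Gu & _).
  apply Gu. split; [apply pb_pair1 | apply pb_pair2].
Qed.

Lemma gmul_inv_r Z (x : Hom Z A) (H : comp f x = comp f (comp i x)) : gmul H = gunit x.
Proof.
  destruct G as (_ & _ & _ & _ & _ & _ & _ & _ & Gv & _).
  apply Gv. split; [apply pb_pair1 | apply pb_pair2].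
Qed.

Lemma gmul_inv_l Z (x : Hom Z A) (H : comp f (comp i x) = comp f x) : gmul H = gunit x.
Proof.
  destruct G as (_ & _ & _ & _ & _ & _ & _ & _ & _ & Gv).
  apply Gv. split; [apply pb_pair1 | apply pb_pair2].
Qed.

Lemma gmul_invK_l Z (a w : Hom Z A) (Hw : comp f a = comp f w)
    (H : comp f (comp i a) = comp f (gmul Hw)) :
  gmul H = w.
Proof.
  assert (Hia : comp f (comp i a) = comp f a) by apply f_inv.
  assert (H2 : comp f (gmul Hia) = comp f w) by (rewrite f_gmul; congruence).
  rewrite <- (gmul_assoc H2).
  rewrite <- (gmul_unit_l (f_gunit w)). apply gmul_ext; [|reflexivity].
  rewrite gmul_inv_l. apply gunit_eq, Hw.
Qed.

Lemma gmul_invK_r Z (a w : Hom Z A) (Hw : comp f w = comp f a)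
    (H : comp f (gmul Hw) = comp f (comp i a)) :
  gmul H = w.
Proof.
  assert (Hia : comp f a = comp f (comp i a)) by (symmetry; apply f_inv).
  assert (H4 : comp f w = comp f (gmul Hia)) by (rewrite f_gmul; exact Hw).
  rewrite (gmul_assoc H H4).
  rewrite <- (gmul_unit_r (eq_sym (f_gunit w))). apply gmul_ext; [reflexivity|].
  rewrite gmul_inv_r. symmetry. apply gunit_eq, Hw.
Qed.

Lemma gmul_cancel_l Z (a x y : Hom Z A) (Hx : comp f a = comp f x) (Hy : comp f a = comp f y) :
  gmul Hx = gmul Hy -> x = y.
Proof.
  intros E.
  assert (Hx' : comp f (comp i a) = comp f (gmul Hx)) by (rewrite f_inv, f_gmul; reflexivity).
  assert (Hy' : comp f (comp i a) = comp f (gmul Hy)) by (rewrite f_inv, f_gmul; reflexivity).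
  rewrite <- (gmul_invK_l Hx'), <- (gmul_invK_l Hy'). apply gmul_ext; [reflexivity | exact E].
Qed.

Lemma gmul_cancel_r Z (a x y : Hom Z A) (Hx : comp f x = comp f a) (Hy : comp f y = comp f a) :
  gmul Hx = gmul Hy -> x = y.
Proof.
  intros E.
  assert (Hx' : comp f (gmul Hx) = comp f (comp i a)) by (rewrite f_inv, f_gmul; exact Hx).
  assert (Hy' : comp f (gmul Hy) = comp f (comp i a)) by (rewrite f_inv, f_gmul; exact Hy).
  rewrite <- (gmul_invK_r Hx'), <- (gmul_invK_r Hy'). apply gmul_ext; [exact E | reflexivity].
Qed.

Lemma inv_inj Z (x y : Hom Z A) : comp i x = comp i y -> x = y.
Proof.
  intros E.
  assert (Exy : comp f x = comp f y) by (rewrite <- (f_inv x), <- (f_inv y), E; reflexivity).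
  assert (Hx : comp f x = comp f (comp i x)) by (symmetry; apply f_inv).
  assert (Hy : comp f y = comp f (comp i x)) by (rewrite E; symmetry; apply f_inv).
  apply (gmul_cancel_r (Hx:=Hx) (Hy:=Hy)).
  rewrite gmul_inv_r. transitivity (gunit y); [apply gunit_eq, Exy|].
  rewrite <- (gmul_inv_r (eq_sym (f_inv y))). apply gmul_ext; [reflexivity | symmetry; exact E].
Qed.

Lemma pb_inv_comm : comp f (pb1 f f) = comp f (comp i (pb2 f f)).
Proof. rewrite f_inv. apply pb_comm. Qed.

Lemma pb_inv_comm_comp Z (u : Hom Z (pb f f)) :
  comp f (comp (pb1 f f) u) = comp f (comp i (comp (pb2 f f) u)).
Proof. rewrite f_inv. apply pb_comm_comp. Qed.

Definition gdiv : Hom (pb f f) A := comp m (pb_pair pb_inv_comm).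

Lemma gdiv_comp Z (u : Hom Z (pb f f)) : comp gdiv u = gmul (pb_inv_comm_comp u).
Proof.
  unfold gdiv, gmul. rewrite <- comp_assoc. f_equal.
  apply pb_uniq; rewrite comp_assoc, ?pb_pair1, ?pb_pair2, <- ?comp_assoc; reflexivity.
Qed.

Lemma gdiv_diag Z (x : Hom Z A) : comp gdiv (pb_diag f x) = gunit x.
Proof.
  rewrite gdiv_comp, <- (gmul_inv_r (eq_sym (f_inv x))).
  apply gmul_ext; [apply pb1_diag | rewrite pb2_diag; reflexivity].
Qed.

Lemma internal_group_iso (wcd : weakly_congruence_distributive C) : is_iso f.
Proof.
  apply (split_epi_mono_iso (s := s)); [exact (proj1 G)|].
  apply (wcd_mono_criterion wcd (T := kernel_pair gdiv)); [apply kernel_pair_equiv | | |].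
  - intros Z u v Tuv E1. apply pb_uniq; [exact E1|]. apply inv_inj.
    rewrite in_kernel_pair, !gdiv_comp in Tuv.
    assert (Hv : comp f (comp (pb1 f f) u) = comp f (comp i (comp (pb2 f f) v)))
      by (rewrite E1; apply pb_inv_comm_comp).
    apply (gmul_cancel_l (Hx:=pb_inv_comm_comp u) (Hy:=Hv)).
    rewrite Tuv. apply gmul_ext; [symmetry; exact E1 | reflexivity].
  - intros Z u v Tuv E2. apply pb_uniq; [|exact E2].
    rewrite in_kernel_pair, !gdiv_comp in Tuv.
    assert (Hv : comp f (comp (pb1 f f) v) = comp f (comp i (comp (pb2 f f) u)))
      by (rewrite E2; apply pb_inv_comm_comp).
    apply (gmul_cancel_r (Hx:=pb_inv_comm_comp u) (Hy:=Hv)).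
    rewrite Tuv. apply gmul_ext; [reflexivity | rewrite E2; reflexivity].
  - intros Z x y Exy. apply in_kernel_pair. rewrite !gdiv_diag. apply gunit_eq, Exy.
Qed.

End InternalGroup.

Section AssociativeMaltsev.
Variable C : FinCompleteCategory.
Variables (Y : C) (p : Hom (cube Y) Y).
Hypothesis M : is_assoc_maltsev p.

Definition triple Z (x y z : Hom Z Y) : Hom Z (cube Y) := pair (pair x y) z.
Definition maltsev Z (x y z : Hom Z Y) : Hom Z Y := comp p (triple x y z).

Lemma prj1_triple Z (x y z : Hom Z Y) : comp (prj1 (prod Y Y) Y) (triple x y z) = pair x y.
Proof. apply prj1_pair. Qed.

Lemma prj2_triple Z (x y z : Hom Z Y) : comp (prj2 (prod Y Y) Y) (triple x y z) = z.
Proof. apply prj2_pair. Qed.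

Lemma is_triple_triple Z (x y z : Hom Z Y) : is_triple (triple x y z) x y z.
Proof. unfold is_triple, triple. rewrite !prj1_pair, !prj2_pair. auto. Qed.

Lemma maltsev_xyy Z (x y : Hom Z Y) : maltsev x y y = x.
Proof. apply (proj1 M Z x y), is_triple_triple. Qed.

Lemma maltsev_yyx Z (x y : Hom Z Y) : maltsev y y x = x.
Proof. apply (proj1 (proj2 M) Z x y), is_triple_triple. Qed.

Lemma maltsev_assoc Z (x y z a b : Hom Z Y) :
  maltsev x y (maltsev z a b) = maltsev (maltsev x y z) a b.
Proof.
  apply (proj2 (proj2 M) Z x y z a b (triple z a b) (triple x y (maltsev z a b))
           (triple x y z) (triple (maltsev x y z) a b));
    apply is_triple_triple.
Qed.

Definition heap_rel : span (prod Y Y) :=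
  {| sp_ob := cube Y; sp1 := prj1 (prod Y Y) Y; sp2 := pair p (prj2 (prod Y Y) Y) |}.

Lemma in_heap_rel Z (u v : Hom Z (prod Y Y)) :
  in_rel heap_rel u v <->
  maltsev (comp (prj1 Y Y) u) (comp (prj2 Y Y) u) (comp (prj2 Y Y) v) = comp (prj1 Y Y) v.
Proof.
  split.
  - intros [d [<- <-]]. simpl in d |- *. change (Hom Z (cube Y)) in d.
    rewrite !pair_comp, prj1_pair, prj2_pair.
    unfold maltsev, triple. f_equal. rewrite <- pair_eta. symmetry. apply pair_eta.
  - intros E. exists (triple (comp (prj1 Y Y) u) (comp (prj2 Y Y) u) (comp (prj2 Y Y) v)).
    cbn [heap_rel sp_ob sp1 sp2]. split.
    + rewrite prj1_triple. symmetry. apply pair_eta.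
    + rewrite pair_comp, prj2_triple.
      transitivity (pair (comp (prj1 Y Y) v) (comp (prj2 Y Y) v)).
      * f_equal. exact E.
      * symmetry. apply pair_eta.
Qed.

Lemma heap_rel_equiv : is_equivalence_relation heap_rel.
Proof.
  split; [|split; [|split]].
  - intros Z a b E1 E2. simpl in *. apply pair_uniq; [exact E1|].
    pose proof (f_equal (comp (prj2 Y Y)) E2) as E3.
    rewrite !comp_assoc, prj2_pair in E3. exact E3.
  - intros Z x. apply in_heap_rel, maltsev_xyy.
  - intros Z x y. rewrite !in_heap_rel. intros E.
    rewrite <- E, <- maltsev_assoc, maltsev_yyx, maltsev_xyy. reflexivity.
  - intros Z x y z. rewrite !in_heap_rel. intros E1 E2.
    rewrite <- E2, <- E1, <- maltsev_assoc, maltsev_yyx. reflexivity.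
Qed.

Lemma assoc_maltsev_subterminal (wcd : weakly_congruence_distributive C) :
  is_mono (to_term Y).
Proof.
  apply (wcd_mono_criterion wcd (T := heap_rel)); [exact heap_rel_equiv | | |].
  - intros Z u v Huv E1. apply in_heap_rel in Huv. apply pair_uniq; [exact E1|].
    change (comp (prj1 Y Y) u = comp (prj1 Y Y) v) in E1.
    set (a := comp (prj1 Y Y) u) in *. set (b := comp (prj2 Y Y) u) in *.
    set (d := comp (prj2 Y Y) v) in *. rewrite <- E1 in Huv.
    transitivity (maltsev b a (maltsev a b d)).
    + rewrite Huv, maltsev_xyy. reflexivity.
    + rewrite maltsev_assoc, maltsev_xyy, maltsev_yyx. reflexivity.
  - intros Z u v Huv E2. apply in_heap_rel in Huv. apply pair_uniq; [|exact E2].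
    change (comp (prj2 Y Y) u = comp (prj2 Y Y) v) in E2.
    rewrite <- Huv, E2, maltsev_xyy. reflexivity.
  - intros Z x y _. apply in_heap_rel.
    unfold prj1, prj2, prod. rewrite !pb1_diag, !pb2_diag. apply maltsev_yyx.
Qed.

End AssociativeMaltsev.

Theorem mainTheorem11 (C : FinCompleteCategory) :
  weakly_congruence_distributive C ->
  (forall (X A : C) (f : Hom A X) (s : Hom X A) (m : Hom (pb f f) A) (i : Hom A A),
      is_internal_group_in_Pt s m i -> is_iso f) /\
  (forall (Y : C) (p : Hom (cube Y) Y),
      is_assoc_maltsev p -> is_mono (to_term Y)).
Proof.
  intros wcd. split.
  - intros X A f s m i G. exact (internal_group_iso G wcd).
  - intros Y p M. exact (assoc_maltsev_subterminal M wcd).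
Qed.
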